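(* For every field $\mathbb{F}$, every $n^d\times n^d$ matrix $M$ over $\mathbb{F}$ and every $\kappa\subseteq[d]$, \[\mathrm{rank}(M^{\top_\kappa})\le n^{2\min\{|\kappa|,\,d-|\kappa|\}}\,\mathrm{rank}(M).\]
   Context: Rows and columns are indexed by $[n]^d$. For $k\in[d]$, $M^{\top_k}_{(i_1,\dots,i_d),(j_1,\dots,j_d)}=M_{(\dots,i_{k-1},j_k,i_{k+1},\dots),(\dots,j_{k-1},i_k,j_{k+1},\dots)}$ (swap the $k$-th row and column indices); $M^{\top_\kappa}$ is the composition over $k\in\kappa$. *)

From mathcomp Require Import all_boot all_order all_algebra.
Set Implicit Arguments. Unset Strict Implicit. Unset Printing Implicit Defensive.
Import GRing.Theory.
Local Open Scope ring_scope.

Definition midx (d n : nat) : finType := {ffun 'I_d -> 'I_n}.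

Definition swap_idx d n (kappa : {set 'I_d}) (i j : midx d n) : midx d n * midx d n :=
  ([ffun k => if k \in kappa then j k else i k],
   [ffun k => if k \in kappa then i k else j k]).

Definition partial_transpose (F : fieldType) d n (kappa : {set 'I_d})
  (M : 'M[F]_(#|midx d n|)) : 'M[F]_(#|midx d n|) :=
  \matrix_(a, b)
    let p := swap_idx kappa (enum_val a) (enum_val b) in
    M (enum_rank p.1) (enum_rank p.2).

From mathcomp Require Import all_boot all_order all_algebra.
Set Implicit Arguments. Unset Strict Implicit. Unset Printing Implicit Defensive.
Import GRing.Theory.
Local Open Scope ring_scope.

(* Write M as a sum of rank M outer products u_k v_k; the partial transpose
   is linear.  The entry (a, b) of the partial transpose of u v is
   u(a off kappa, b on kappa) * v(b off kappa, a on kappa); splitting on the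
   kappa-parts s of b and t of a makes it a sum of n^|kappa| * n^|kappa| outer
   products, so it has rank at most n^(2|kappa|).  Transposing the partial
   transpose for kappa gives the one for the complement of kappa, whence the
   bound with d - |kappa| as well. *)

Section RankOuter.
Variable F : fieldType.

Lemma mxrank_sum_le m p (I : finType) (A : I -> 'M[F]_(m, p)) :
  (\rank (\sum_i A i)%R <= \sum_i \rank (A i))%N.
Proof.
elim/big_ind2: _ => [|A1 A2 r1 r2 le1 le2|//]; first by rewrite mxrank0.
exact: leq_trans (mxrank_add _ _) (leq_add le1 le2).
Qed.

Lemma mxrank_sum_outer m p (I : finType) (u : I -> 'cV[F]_m) (v : I -> 'rV[F]_p) :
  (\rank (\sum_i u i *m v i)%R <= #|I|)%N.
Proof.
apply: leq_trans (mxrank_sum_le _) _; rewrite -sum1_card leq_sum // => i _.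
exact: leq_trans (mxrankM_maxl _ _) (rank_leq_col _).
Qed.

Lemma mulmx_sum_col_row m n p (A : 'M[F]_(m, n)) (B : 'M[F]_(n, p)) :
  A *m B = \sum_k col k A *m row k B.
Proof.
apply/matrixP => i j; rewrite !mxE summxE; apply: eq_bigr => k _.
by rewrite !mxE big_ord1 !mxE.
Qed.

Lemma mx_sum_outer_base m p (A : 'M[F]_(m, p)) :
  A = \sum_(k < \rank A) col k (col_base A) *m row k (row_base A).
Proof. by rewrite -mulmx_sum_col_row mulmx_base. Qed.

End RankOuter.

Definition subidx d n (K : {set 'I_d}) := {ffun {k : 'I_d | k \in K} -> 'I_n}.

Definition restr_idx d n (K : {set 'I_d}) (i : midx d n) : subidx n K :=
  [ffun k => i (val k)].

Definition override_idx d n (K : {set 'I_d}) (s : subidx n K) (i : midx d n) :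
    midx d n :=
  [ffun k => if insub k is Some k' then s k' else i k].

Lemma card_subidx d n (K : {set 'I_d}) : #|subidx n K| = (n ^ #|K|)%N.
Proof. by rewrite card_ffun card_ord card_sig. Qed.

Lemma override_restr_idx d n (K : {set 'I_d}) (i j : midx d n) :
  override_idx (restr_idx K j) i = [ffun k => if k \in K then j k else i k].
Proof.
apply/ffunP => k; rewrite !ffunE; case: insubP => [k' _ <-|/negbTE ->//].
by rewrite ffunE (valP k').
Qed.

Section PartialTranspose.
Variables (F : fieldType) (d n : nat).
Local Notation N := #|midx d n|.

Lemma partial_transpose_sum (kappa : {set 'I_d}) (I : finType)
    (A : I -> 'M[F]_N) :
  partial_transpose kappa (\sum_i A i) = \sum_i partial_transpose kappa (A i).
Proof.
apply/matrixP => a b; rewrite summxE !mxE /= summxE.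
by apply: eq_bigr => i _; rewrite mxE.
Qed.

Lemma partial_transposeC (kappa : {set 'I_d}) (M : 'M[F]_N) :
  partial_transpose (~: kappa) M = (partial_transpose kappa M)^T.
Proof.
apply/matrixP => a b; rewrite !mxE /swap_idx.
by congr (M (enum_rank _) (enum_rank _)); apply/ffunP => k;
  rewrite !ffunE in_setC; case: (k \in kappa).
Qed.

Lemma partial_transpose_outer (kappa : {set 'I_d}) (u : 'cV[F]_N) (v : 'rV[F]_N) :
  partial_transpose kappa (u *m v) =
  \sum_(st : subidx n kappa * subidx n kappa)
     (\col_a (if restr_idx kappa (enum_val a) == st.2
              then u (enum_rank (override_idx st.1 (enum_val a))) 0 else 0))
  *m (\row_b (if restr_idx kappa (enum_val b) == st.1
              then v 0 (enum_rank (override_idx st.2 (enum_val b))) else 0)).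
Proof.
apply/matrixP => a b; rewrite summxE.
rewrite (bigD1 (restr_idx kappa (enum_val b), restr_idx kappa (enum_val a))) //=.
rewrite big1 ?addr0 => [|[s t] /=]; rewrite !mxE big_ord1 !mxE.
  by rewrite /= mxE big_ord1 !eqxx !override_restr_idx.
rewrite xpair_eqE negb_and => /orP[] ne; rewrite eq_sym in ne.
  by rewrite (negbTE ne) mulr0.
by rewrite (negbTE ne) mul0r.
Qed.

Lemma mxrank_partial_transpose_outer (kappa : {set 'I_d})
    (u : 'cV[F]_N) (v : 'rV[F]_N) :
  (\rank (partial_transpose kappa (u *m v)) <= n ^ (2 * #|kappa|))%N.
Proof.
rewrite partial_transpose_outer; apply: leq_trans (mxrank_sum_outer _ _) _.
by rewrite card_prod card_subidx mul2n -addnn expnD.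
Qed.

Lemma mxrank_partial_transpose_le (kappa : {set 'I_d}) (M : 'M[F]_N) :
  (\rank (partial_transpose kappa M) <= n ^ (2 * #|kappa|) * \rank M)%N.
Proof.
rewrite {1}[M]mx_sum_outer_base partial_transpose_sum.
apply: leq_trans (mxrank_sum_le _) _.
rewrite mulnC -[X in (X * _)%N]card_ord -sum_nat_const.
by apply: leq_sum => k _; apply: mxrank_partial_transpose_outer.
Qed.

End PartialTranspose.

Theorem lemma3p8 (F : fieldType) (d n : nat) (kappa : {set 'I_d})
  (M : 'M[F]_(#|midx d n|)) :
  (\rank (partial_transpose kappa M)
     <= n ^ (2 * minn #|kappa| (d - #|kappa|)) * \rank M)%N.
Proof.
case: (leqP #|kappa| (d - #|kappa|)%N) => _.
  exact: mxrank_partial_transpose_le.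
have card_kappaC : (d - #|kappa|)%N = #|~: kappa|.
  by rewrite -{1}(card_ord d) -(cardsC kappa) addKn.
rewrite card_kappaC -[kappa in partial_transpose kappa]setCK.
by rewrite partial_transposeC mxrank_tr mxrank_partial_transpose_le.
Qed.
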